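(* For $\mathbf z,\mathbf w\in\mathbb C^m\setminus\{0\}$: $$\mathbf Q_2^{(\hbar)}(\mathbf z,\mathbf w)=\tfrac12\Big(e^{(z_1\overline{w_1}+z_2\overline{w_2})/\hbar}+e^{-(z_1\overline{w_1}+z_2\overline{w_2})/\hbar}\Big),$$ $$\mathbf Q_4^{(\hbar)}(\mathbf z,\mathbf w)=\frac{1}{2\pi}\int_0^{2\pi}\exp\Big(\tfrac1\hbar\,\mathbf z\cdot \mathrm T(g(\psi))\mathbf w\Big)d\psi,$$ $$\mathbf Q_8^{(\hbar)}(\mathbf z,\mathbf w)=\int_{\theta=0}^{\pi/2}\int_{\alpha=0}^{2\pi}\int_{\gamma=0}^{2\pi}\exp\Big(\tfrac1\hbar\,\mathbf z\cdot \mathrm T(g(\theta,\alpha,\gamma))\mathbf w\Big)\,dm(\theta,\alpha,\gamma),$$ where $g(\psi)=e^{i\psi}\in S^1$, $g(\theta,\alpha,\gamma)=\begin{pmatrix}\cos\theta\, e^{i\alpha}&\sin\theta\, e^{i\gamma}\\ -\sin\theta\, e^{-i\gamma}&\cos\theta\, e^{-i\alpha}\end{pmatrix}\in\mathrm{SU}(2)$, and $dm(\theta,\alpha,\gamma)=\frac{1}{2\pi^2}\sin\theta\cos\theta\,d\theta\,d\alpha\,d\gamma$.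
   Context: For $\mathbf z,\mathbf w\in\mathbb C^k$ write $\mathbf z\cdot\mathbf w=\sum_{s=1}^k z_s\overline{w_s}$; $\hbar>0$. The kernels are $\mathbf Q_2^{(\hbar)}(\mathbf z,\mathbf w)=\sum_{k\ge0}\frac{(z_1\overline{w_1}+z_2\overline{w_2})^{2k}}{(2k)!\hbar^{2k}}$, $\mathbf Q_4^{(\hbar)}(\mathbf z,\mathbf w)=\sum_{k\ge0}\frac{(z_1\overline{w_1}+z_2\overline{w_2})^{k}(z_3\overline{w_3}+z_4\overline{w_4})^{k}}{(k!)^2\hbar^{2k}}$, $\mathbf Q_8^{(\hbar)}(\mathbf z,\mathbf w)=\sum_{k\ge0}\frac{\varrho(\mathbf z,\mathbf w)^k}{k!(k+1)!\hbar^{2k}}$, with $\varrho(\mathbf u,\mathbf v)=[u_1\overline{v_1}+u_2\overline{v_2}+u_3\overline{v_3}+u_4\overline{v_4}][u_5\overline{v_5}+u_6\overline{v_6}+u_7\overline{v_7}+u_8\overline{v_8}]+[u_7\overline{v_1}-u_8\overline{v_2}+u_5\overline{v_3}-u_6\overline{v_4}][u_2\overline{v_8}-u_3\overline{v_5}+u_4\overline{v_6}-u_1\overline{v_7}]$. Group actions: for $g=e^{i\theta}\in S^1$, $\mathrm T(g)=\mathrm{diag}(e^{-i\theta},e^{-i\theta},e^{i\theta},e^{i\theta})$ on $\mathbb C^4$; for $g\in\mathrm{SU}(2)$, $\mathrm T(g)=\mathbf L^\dagger\mathbf V(g)\mathbf L$ on $\mathbb C^8$, where $\mathbf V(g)$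 is the block-diagonal $8\times8$ matrix with four diagonal $2\times2$ blocks equal to $g$, and $\mathbf L$ is the $8\times 8$ real matrix whose rows are, in order, $e_1,e_7,e_3,e_5,-e_4,e_6,-e_2,e_8$ ($e_j$ the standard basis row vectors). *)

From Stdlib Require Import Reals Lra Arith ClassicalEpsilon Factorial.
Open Scope R_scope.

Record C := mkC { Re : R ; Im : R }.

Definition C0 : C := mkC 0 0.
Definition C1 : C := mkC 1 0.
Definition RtoC (r : R) : C := mkC r 0.
Definition Cadd (a b : C) : C := mkC (Re a + Re b) (Im a + Im b).
Definition Copp (a : C) : C := mkC (- Re a) (- Im a).
Definition Csub (a b : C) : C := Cadd a (Copp b).
Definition Cmul (a b : C) : C :=
  mkC (Re a * Re b - Im a * Im b) (Re a * Im b + Im a * Re b).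
Definition Cscale (r : R) (a : C) : C := mkC (r * Re a) (r * Im a).
Definition Cconj (a : C) : C := mkC (Re a) (- Im a).
Fixpoint Cpow (a : C) (n : nat) : C :=
  match n with O => C1 | S n => Cmul a (Cpow a n) end.
Definition Cexp (a : C) : C := mkC (exp (Re a) * cos (Im a)) (exp (Re a) * sin (Im a)).
Definition Cexpi (t : R) : C := mkC (cos t) (sin t).

Definition Ccv (u : nat -> C) (l : C) : Prop :=
  Un_cv (fun n => Re (u n)) (Re l) /\ Un_cv (fun n => Im (u n)) (Im l).

Fixpoint Cpartial (f : nat -> C) (N : nat) : C :=
  match N with O => f O | S N => Cadd (Cpartial f N) (f (S N)) end.

Definition Cseries_sum (f : nat -> C) (l : C) : Prop := Ccv (Cpartial f) l.

(* A vector of C^k is a function nat -> C of which only the entries 1..k matter;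
   a k x k matrix is a function nat -> nat -> C with entries (i,j), 1<=i,j<=k. *)
Definition Cvec := nat -> C.
Definition Cmat := nat -> nat -> C.

Fixpoint Csum (k : nat) (f : nat -> C) : C :=
  match k with O => C0 | S k => Cadd (Csum k f) (f (S k)) end.

Definition Cdot (k : nat) (z w : Cvec) : C := Csum k (fun s => Cmul (z s) (Cconj (w s))).

Definition vec_nonzero (k : nat) (z : Cvec) : Prop :=
  exists s, (1 <= s <= k)%nat /\ z s <> C0.

Definition mat_vec (k : nat) (A : Cmat) (w : Cvec) : Cvec :=
  fun i => Csum k (fun j => Cmul (A i j) (w j)).
Definition mat_mul (k : nat) (A B : Cmat) : Cmat :=
  fun i j => Csum k (fun l => Cmul (A i l) (B l j)).
Definition mat_adj (A : Cmat) : Cmat := fun i j => Cconj (A j i).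

Definition T_S1 (psi : R) : Cmat := fun i j =>
  if Nat.eqb i j then
    (if Nat.eqb i 1 then Cexpi (- psi) else if Nat.eqb i 2 then Cexpi (- psi)
     else if Nat.eqb i 3 then Cexpi psi else if Nat.eqb i 4 then Cexpi psi else C0)
  else C0.

Definition mat2 := nat -> nat -> C.

(* V(g): block diagonal 8x8 with four diagonal 2x2 blocks equal to g *)
Definition V8 (g : mat2) : Cmat := fun i j =>
  if andb (andb (Nat.leb 1 i) (Nat.leb i 8)) (andb (Nat.leb 1 j) (Nat.leb j 8)) then
    (if Nat.eqb ((i - 1) / 2) ((j - 1) / 2)
     then g (S ((i - 1) mod 2)) (S ((j - 1) mod 2)) else C0)
  else C0.

(* L: rows e_1, e_7, e_3, e_5, -e_4, e_6, -e_2, e_8 *)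
Definition Lrow (i : nat) : nat * R :=
  match i with
  | 1 => (1%nat, 1) | 2 => (7%nat, 1) | 3 => (3%nat, 1) | 4 => (5%nat, 1)
  | 5 => (4%nat, -1) | 6 => (6%nat, 1) | 7 => (2%nat, -1) | 8 => (8%nat, 1)
  | _ => (0%nat, 0) end.
Definition L8 : Cmat := fun i j =>
  let (c, sgn) := Lrow i in if Nat.eqb c j then RtoC sgn else C0.

Definition T_SU2 (g : mat2) : Cmat := mat_mul 8 (mat_adj L8) (mat_mul 8 (V8 g) L8).

Definition g_SU2 (theta alpha gamma : R) : mat2 := fun a b =>
  match a, b with
  | 1%nat, 1%nat => Cscale (cos theta) (Cexpi alpha)
  | 1%nat, 2%nat => Cscale (sin theta) (Cexpi gamma)
  | 2%nat, 1%nat => Cscale (- sin theta) (Cexpi (- gamma))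
  | 2%nat, 2%nat => Cscale (cos theta) (Cexpi (- alpha))
  | _, _ => C0 end.

Definition u12 (z w : Cvec) : C :=
  Cadd (Cmul (z 1%nat) (Cconj (w 1%nat))) (Cmul (z 2%nat) (Cconj (w 2%nat))).
Definition u34 (z w : Cvec) : C :=
  Cadd (Cmul (z 3%nat) (Cconj (w 3%nat))) (Cmul (z 4%nat) (Cconj (w 4%nat))).

Definition pair_ (u v : Cvec) (a b : nat) : C := Cmul (u a) (Cconj (v b)).

Definition varrho (u v : Cvec) : C :=
  Cadd
    (Cmul (Csum 4 (fun s => pair_ u v s s)) (Csum 4 (fun s => pair_ u v (s + 4) (s + 4))))
    (Cmul
      (Cadd (Csub (pair_ u v 7 1) (pair_ u v 8 2)) (Csub (pair_ u v 5 3) (pair_ u v 6 4)))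
      (Cadd (Csub (pair_ u v 2 8) (pair_ u v 3 5)) (Csub (pair_ u v 4 6) (pair_ u v 1 7)))).

Definition Q2_term (hbar : R) (z w : Cvec) (k : nat) : C :=
  Cscale (/ (INR (fact (2 * k)) * hbar ^ (2 * k))) (Cpow (u12 z w) (2 * k)).
Definition Q4_term (hbar : R) (z w : Cvec) (k : nat) : C :=
  Cscale (/ ((INR (fact k)) ^ 2 * hbar ^ (2 * k)))
         (Cmul (Cpow (u12 z w) k) (Cpow (u34 z w) k)).
Definition Q8_term (hbar : R) (z w : Cvec) (k : nat) : C :=
  Cscale (/ (INR (fact k) * INR (fact (S k)) * hbar ^ (2 * k))) (Cpow (varrho z w) k).

(* Riemann integral of a real function on [a,b]; (default 0 if not integrable,
   which never happens below: all integrands are continuous). *)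
Definition Rint (f : R -> R) (a b : R) : R :=
  match excluded_middle_informative (inhabited (Riemann_integrable f a b)) with
  | left H => RiemannInt (epsilon H (fun _ => True))
  | right _ => 0
  end.

Definition Cint (f : R -> C) (a b : R) : C :=
  mkC (Rint (fun t => Re (f t)) a b) (Rint (fun t => Im (f t)) a b).

(* All three kernels come from expanding the exponential into its power series and
   integrating term by term, the interchange being justified by the Weierstrass M-test.
   For Q_2 the odd terms of e^{u/h} + e^{-u/h} cancel.  For Q_4,
   z . T(e^{i psi}) w = u12 e^{i psi} + u34 e^{-i psi}, and averaging
   exp (a e^{i psi} + b e^{-i psi}) over the circle keeps only the terms (ab)^k / (k!)^2,
   by orthogonality of the characters e^{i m psi}.  For Q_8,
   z . T(g(theta,alpha,gamma)) w = cos theta (e^{-i alpha} A + e^{i alpha} B)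
                                  + sin theta (e^{-i gamma} C - e^{i gamma} D)
   for four bilinear forms with varrho = A B - C D.  The gamma- and alpha-averages give two
   such Bessel-type series, in -sin^2 theta C D / h^2 and cos^2 theta A B / h^2, and the
   theta-integral against sin 2 theta merges them, through the beta integrals
   int_0^{pi/2} cos^{2j+1} sin^{2l+1} = j! l! / (2 (j+l+1)!), into
   sum_n varrho^n / (n! (n+1)! h^{2n}). *)

From Pilot Require Import Defs.
From Stdlib Require Import Reals Lra Lia FunctionalExtensionality ClassicalEpsilon ZArith.
From Coquelicot Require Import
  Rbar Hierarchy RInt Series PSeries Derive Lim_seq AutoDerive ElemFct RInt_analysis.
(* [Reals] exports [Binomial.C]; re-importing [Defs] makes [C] the complex numbers again. *)
Import Defs.
Open Scope R_scope.

(** * Complex arithmetic *)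

Lemma C_ext (a b : C) : Re a = Re b -> Im a = Im b -> a = b.
Proof. destruct a, b; simpl; intros; subst; reflexivity. Qed.

Lemma C_ring : ring_theory C0 C1 Cadd Cmul Csub Copp (@eq C).
Proof.
  constructor; unfold Csub; intros;
    repeat match goal with a : C |- _ => destruct a end; apply C_ext; simpl; ring.
Qed.
Add Ring C_ring : C_ring.

Lemma Cscale_RtoC r a : Cscale r a = Cmul (RtoC r) a.
Proof. apply C_ext; simpl; ring. Qed.

Lemma RtoC_mult a b : RtoC (a * b) = Cmul (RtoC a) (RtoC b).
Proof. apply C_ext; simpl; ring. Qed.

Lemma Cpow_Cmul a b n : Cpow (Cmul a b) n = Cmul (Cpow a n) (Cpow b n).
Proof. induction n as [|n IH]; simpl; [|rewrite IH]; ring. Qed.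

Lemma Cpow_add a n m : Cpow a (n + m) = Cmul (Cpow a n) (Cpow a m).
Proof. induction n as [|n IH]; simpl; [|rewrite IH]; ring. Qed.

Lemma Cpow_RtoC r n : Cpow (RtoC r) n = RtoC (r ^ n).
Proof. induction n as [|n IH]; simpl; [|rewrite IH, RtoC_mult]; reflexivity. Qed.

Lemma Cpow_Cscale r a n : Cpow (Cscale r a) n = Cscale (r ^ n) (Cpow a n).
Proof. rewrite !Cscale_RtoC, Cpow_Cmul, Cpow_RtoC; reflexivity. Qed.

Lemma Cexp_add a b : Cexp (Cadd a b) = Cmul (Cexp a) (Cexp b).
Proof. apply C_ext; simpl; rewrite exp_plus, ?cos_plus, ?sin_plus; ring. Qed.

Lemma Cexpi_add a b : Cexpi (a + b) = Cmul (Cexpi a) (Cexpi b).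
Proof. apply C_ext; simpl; rewrite ?cos_plus, ?sin_plus; ring. Qed.

Lemma Cpow_Cexpi t n : Cpow (Cexpi t) n = Cexpi (INR n * t).
Proof.
  induction n as [|n IH].
  - apply C_ext; simpl; rewrite Rmult_0_l, ?cos_0, ?sin_0; reflexivity.
  - rewrite S_INR, Rmult_plus_distr_r, Rmult_1_l, Rplus_comm, Cexpi_add, <- IH.
    reflexivity.
Qed.

Lemma Cpartial_ext f g n :
  (forall k, (k <= n)%nat -> f k = g k) -> Cpartial f n = Cpartial g n.
Proof.
  induction n as [|n IH]; intros H; simpl; [apply H; lia|].
  rewrite IH, H; auto; intros; apply H; lia.
Qed.

Lemma Cpartial_add f g n :
  Cpartial (fun k => Cadd (f k) (g k)) n = Cadd (Cpartial f n) (Cpartial g n).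
Proof. induction n as [|n IH]; simpl; [|rewrite IH; ring]; reflexivity. Qed.

Lemma Cpartial_mul_l c f n : Cpartial (fun k => Cmul c (f k)) n = Cmul c (Cpartial f n).
Proof. induction n as [|n IH]; simpl; [|rewrite IH; ring]; reflexivity. Qed.

Lemma Cpartial_scale r f n : Cpartial (fun k => Cscale r (f k)) n = Cscale r (Cpartial f n).
Proof.
  rewrite Cscale_RtoC, <- Cpartial_mul_l.
  apply Cpartial_ext; intros; apply Cscale_RtoC.
Qed.

Lemma Cpartial_shift f n : Cpartial f (S n) = Cadd (f O) (Cpartial (fun k => f (S k)) n).
Proof. induction n as [|n IH]; simpl in *; [|rewrite IH; ring]; reflexivity. Qed.

Lemma Cpartial_zero f n : (forall m, (m <= n)%nat -> f m = C0) -> Cpartial f n = C0.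
Proof.
  induction n as [|n IH]; intros H; simpl; [apply H; lia|].
  rewrite IH, H; [ring|lia|intros; apply H; lia].
Qed.

Lemma Cpartial_single f n l : (l <= n)%nat ->
  (forall m, (m <= n)%nat -> m <> l -> f m = C0) -> Cpartial f n = f l.
Proof.
  induction n as [|n IH]; intros Hl H.
  - replace l with O by lia; reflexivity.
  - simpl. destruct (Nat.eq_dec l (S n)) as [->|Hne].
    + rewrite Cpartial_zero; [ring|intros; apply H; lia].
    + rewrite IH, (H (S n)); [ring|lia|lia|lia|intros; apply H; lia].
Qed.

Lemma Re_Cpartial f n : Re (Cpartial f n) = sum_f_R0 (fun k => Re (f k)) n.
Proof. induction n as [|n IH]; simpl; [|rewrite IH]; reflexivity. Qed.

Lemma Im_Cpartial f n : Im (Cpartial f n) = sum_f_R0 (fun k => Im (f k)) n.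
Proof. induction n as [|n IH]; simpl; [|rewrite IH]; reflexivity. Qed.

(** * Complex series *)

Notation is_Rseries := (@is_series R_AbsRing R_NormedModule).
Notation ex_Rseries := (@ex_series R_AbsRing R_NormedModule).

Definition is_Cseries (a : nat -> C) (l : C) :=
  is_Rseries (fun n => Re (a n)) (Re l) /\ is_Rseries (fun n => Im (a n)) (Im l).

Lemma is_Cseries_Cseries_sum a l : is_Cseries a l -> Cseries_sum a l.
Proof.
  intros [H1 H2]; apply is_series_Reals in H1, H2.
  split; intros eps Heps;
    [destruct (H1 eps Heps) as [N HN]|destruct (H2 eps Heps) as [N HN]];
    exists N; intros n Hn; [rewrite Re_Cpartial|rewrite Im_Cpartial]; auto.
Qed.

Lemma is_Cseries_ext a b l : (forall n, a n = b n) -> is_Cseries a l -> is_Cseries b l.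
Proof.
  intros H [H1 H2]; split; eapply is_series_ext; eauto; intros; simpl; rewrite H; reflexivity.
Qed.

Lemma is_Cseries_unique a l1 l2 : is_Cseries a l1 -> is_Cseries a l2 -> l1 = l2.
Proof.
  intros [H1 H2] [H3 H4]; apply is_series_unique in H1, H2, H3, H4.
  apply C_ext; congruence.
Qed.

Lemma is_Cseries_plus a b la lb : is_Cseries a la -> is_Cseries b lb ->
  is_Cseries (fun n => Cadd (a n) (b n)) (Cadd la lb).
Proof.
  intros [H1 H2] [H3 H4]; split; simpl; apply (@is_series_plus R_AbsRing R_NormedModule); auto.
Qed.

Lemma is_Cseries_scale r a l : is_Cseries a l -> is_Cseries (fun n => Cscale r (a n)) (Cscale r l).
Proof.
  intros [H1 H2]; split; simpl; apply (@is_series_scal_l R_AbsRing R_NormedModule); auto.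
Qed.

Definition Cnorm1 (z : C) := Rabs (Re z) + Rabs (Im z).

Lemma Cnorm1_ge_0 z : 0 <= Cnorm1 z.
Proof. pose proof (Rabs_pos (Re z)); pose proof (Rabs_pos (Im z)); unfold Cnorm1; lra. Qed.

Lemma Rabs_Re_le z : Rabs (Re z) <= Cnorm1 z.
Proof. pose proof (Rabs_pos (Im z)); unfold Cnorm1; lra. Qed.

Lemma Rabs_Im_le z : Rabs (Im z) <= Cnorm1 z.
Proof. pose proof (Rabs_pos (Re z)); unfold Cnorm1; lra. Qed.

Lemma Cnorm1_add a b : Cnorm1 (Cadd a b) <= Cnorm1 a + Cnorm1 b.
Proof.
  pose proof (Rabs_triang (Re a) (Re b)); pose proof (Rabs_triang (Im a) (Im b)).
  unfold Cnorm1; simpl; lra.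
Qed.

Lemma Cnorm1_mul a b : Cnorm1 (Cmul a b) <= Cnorm1 a * Cnorm1 b.
Proof.
  unfold Cnorm1; simpl.
  pose proof (Rabs_triang (Re a * Re b) (- (Im a * Im b))).
  pose proof (Rabs_triang (Re a * Im b) (Im a * Re b)).
  unfold Rminus; rewrite Rabs_Ropp, !Rabs_mult in *.
  pose proof (Rabs_pos (Re a)); pose proof (Rabs_pos (Im a)).
  pose proof (Rabs_pos (Re b)); pose proof (Rabs_pos (Im b)).
  nra.
Qed.

Lemma Cnorm1_scale r a : Cnorm1 (Cscale r a) = Rabs r * Cnorm1 a.
Proof. unfold Cnorm1; simpl; rewrite !Rabs_mult; ring. Qed.

Lemma Cnorm1_pow a n : Cnorm1 (Cpow a n) <= Cnorm1 a ^ n.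
Proof.
  induction n as [|n IH]; simpl.
  - unfold Cnorm1; simpl; rewrite Rabs_R0, Rabs_R1; lra.
  - eapply Rle_trans; [apply Cnorm1_mul|].
    apply Rmult_le_compat_l; [apply Cnorm1_ge_0|exact IH].
Qed.

Lemma Cnorm1_Cpartial f n : Cnorm1 (Cpartial f n) <= sum_f_R0 (fun k => Cnorm1 (f k)) n.
Proof.
  induction n as [|n IH]; simpl; [lra|].
  eapply Rle_trans; [apply Cnorm1_add|lra].
Qed.

Lemma Cnorm1_mul_Cexpi a t : Cnorm1 (Cmul a (Cexpi t)) <= 2 * Cnorm1 a.
Proof.
  assert (Cnorm1 (Cexpi t) <= 2).
  { assert (Rabs (cos t) <= 1) by (apply Rabs_le, COS_bound).
    assert (Rabs (sin t) <= 1) by (apply Rabs_le, SIN_bound).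
    unfold Cnorm1; simpl; lra. }
  pose proof (Cnorm1_mul a (Cexpi t)); pose proof (Cnorm1_ge_0 a); nra.
Qed.

Lemma ex_Rseries_Cnorm1_le a M : (forall n, Cnorm1 (a n) <= M n) -> ex_Rseries M ->
  ex_Rseries (fun n => Cnorm1 (a n)).
Proof.
  intros HM EM; apply (@ex_series_le R_AbsRing R_CompleteNormedModule _ M); auto.
  intros n; rewrite Rabs_pos_eq; [apply HM|apply Cnorm1_ge_0].
Qed.

Lemma ex_Rseries_Re a : ex_Rseries (fun n => Cnorm1 (a n)) -> ex_Rseries (fun n => Rabs (Re (a n))).
Proof.
  apply (@ex_series_le R_AbsRing R_CompleteNormedModule).
  intros n; rewrite Rabs_Rabsolu; apply Rabs_Re_le.
Qed.

Lemma ex_Rseries_Im a : ex_Rseries (fun n => Cnorm1 (a n)) -> ex_Rseries (fun n => Rabs (Im (a n))).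
Proof.
  apply (@ex_series_le R_AbsRing R_CompleteNormedModule).
  intros n; rewrite Rabs_Rabsolu; apply Rabs_Im_le.
Qed.

Lemma ex_Cseries_le a M : (forall n, Cnorm1 (a n) <= M n) -> ex_Rseries M ->
  exists l, is_Cseries a l.
Proof.
  intros HM EM; pose proof (ex_Rseries_Cnorm1_le a M HM EM) as E.
  exists (mkC (Series (fun n => Re (a n))) (Series (fun n => Im (a n)))).
  split; apply Series_correct, ex_series_Rabs;
    [apply ex_Rseries_Re|apply ex_Rseries_Im]; exact E.
Qed.

Lemma is_Cseries_Cauchy_product a b la lb : is_Cseries a la -> is_Cseries b lb ->
  ex_Rseries (fun n => Cnorm1 (a n)) -> ex_Rseries (fun n => Cnorm1 (b n)) ->
  is_Cseries (fun n => Cpartial (fun k => Cmul (a k) (b (n - k)%nat)) n) (Cmul la lb).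
Proof.
  intros [Ha1 Ha2] [Hb1 Hb2] Ea Eb.
  pose proof (ex_Rseries_Re _ Ea); pose proof (ex_Rseries_Im _ Ea).
  pose proof (ex_Rseries_Re _ Eb); pose proof (ex_Rseries_Im _ Eb).
  split; simpl.
  - eapply is_series_ext; [|apply (@is_series_minus R_AbsRing R_NormedModule);
      apply is_series_mult; [apply Ha1|apply Hb1| | |apply Ha2|apply Hb2| |]; auto].
    intros n; rewrite Re_Cpartial; simpl; rewrite minus_sum; reflexivity.
  - eapply is_series_ext; [|apply (@is_series_plus R_AbsRing R_NormedModule);
      apply is_series_mult; [apply Ha1|apply Hb2| | |apply Ha2|apply Hb1| |]; auto].
    intros n; rewrite Im_Cpartial; simpl; rewrite plus_sum; reflexivity.
Qed.

Lemma is_Rseries_0 : is_Rseries (fun _ => 0) 0.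
Proof.
  apply is_series_Reals; intros eps Heps; exists O; intros n _.
  replace (sum_f_R0 (fun _ => 0) n) with 0 by (induction n; simpl; lra).
  unfold Rdist; rewrite Rminus_0_r, Rabs_R0; exact Heps.
Qed.

Lemma is_Rseries_even (f : nat -> R) l :
  is_Rseries (fun k => f (2 * k)%nat) l -> (forall k, f (2 * k + 1)%nat = 0) -> is_Rseries f l.
Proof.
  intros H H0.
  assert (A : is_pseries (fun k => f (2 * k)%nat) (1 ^ 2) l).
  { apply is_pseries_R; eapply is_series_ext; [|exact H].
    intros n; rewrite <- pow_mult, pow1, Rmult_1_r; reflexivity. }
  assert (B : is_pseries (fun k => f (2 * k + 1)%nat) (1 ^ 2) 0).
  { apply is_pseries_R; eapply is_series_ext; [|exact is_Rseries_0].
    intros n; rewrite H0; rewrite Rmult_0_l; reflexivity. }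
  pose proof (is_pseries_odd_even f 1 _ _ A B) as D; apply is_pseries_R in D.
  replace l with (l + 1 * 0) by ring.
  eapply is_series_ext; [|exact D]; intros n; simpl; rewrite pow1; apply Rmult_1_r.
Qed.

Lemma is_Cseries_even a l :
  is_Cseries (fun k => a (2 * k)%nat) l -> (forall k, a (2 * k + 1)%nat = C0) -> is_Cseries a l.
Proof.
  intros [H1 H2] H0; split;
    [apply (is_Rseries_even (fun n => Re (a n)))|apply (is_Rseries_even (fun n => Im (a n)))];
    auto; intros; rewrite H0; reflexivity.
Qed.

(** * The exponential series *)

Lemma INR_fact_pos n : 0 < INR (fact n).
Proof. apply INR_fact_lt_0. Qed.

Definition exp_term (z : C) (n : nat) : C := Cscale (/ INR (fact n)) (Cpow z n).

Lemma exp_term_S z n : Cscale (INR (S n)) (exp_term z (S n)) = Cmul z (exp_term z n).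
Proof.
  unfold exp_term; rewrite fact_simpl, mult_INR.
  pose proof (INR_fact_pos n); pose proof (lt_0_INR (S n) (Nat.lt_0_succ n)).
  set (f := INR (fact n)) in *; set (s := INR (S n)) in *.
  change (Cpow z (S n)) with (Cmul z (Cpow z n)).
  apply C_ext; cbn [Re Im Cscale Cmul]; field; lra.
Qed.

Lemma Cscale_inj r a b : r <> 0 -> Cscale r a = Cscale r b -> a = b.
Proof.
  intros Hr H; apply (f_equal Re) in H as H1; apply (f_equal Im) in H as H2; simpl in *.
  apply C_ext; eapply Rmult_eq_reg_l; eauto.
Qed.

Lemma Cbinomial u v n :
  Cpartial (fun k => Cmul (exp_term u k) (exp_term v (n - k))) n = exp_term (Cadd u v) n.
Proof.
  induction n as [|n IH]; [apply C_ext; simpl; field; lra|].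
  set (B := fun k => Cmul (exp_term u k) (exp_term v (S n - k))).
  change (Cpartial B (S n) = exp_term (Cadd u v) (S n)).
  apply (Cscale_inj (INR (S n))); [apply not_0_INR; lia|].
  (* write the weight [S n] of the [k]-th term as [k + (S n - k)];
     [exp_term_S] absorbs both parts *)
  assert (Hsplit : Cscale (INR (S n)) (Cpartial B (S n)) =
    Cadd (Cpartial (fun k => Cscale (INR k) (B k)) (S n))
         (Cpartial (fun k => Cscale (INR (S n - k)) (B k)) (S n))).
  { rewrite <- Cpartial_scale, <- Cpartial_add; apply Cpartial_ext; intros k Hk.
    replace (INR (S n)) with (INR k + INR (S n - k)) by (rewrite <- plus_INR; f_equal; lia).
    apply C_ext; simpl; ring. }
  assert (Hu : Cpartial (fun k => Cscale (INR k) (B k)) (S n) =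
               Cmul u (Cpartial (fun k => Cmul (exp_term u k) (exp_term v (n - k))) n)).
  { rewrite Cpartial_shift, <- Cpartial_mul_l.
    rewrite (Cpartial_ext _ (fun k => Cmul u (Cmul (exp_term u k) (exp_term v (n - k))))).
    - apply C_ext; simpl; ring.
    - intros k Hk; unfold B; replace (S n - S k)%nat with (n - k)%nat by lia.
      transitivity (Cmul (Cmul u (exp_term u k)) (exp_term v (n - k))); [|ring].
      rewrite <- exp_term_S; apply C_ext; simpl; ring. }
  assert (Hv : Cpartial (fun k => Cscale (INR (S n - k)) (B k)) (S n) =
               Cmul v (Cpartial (fun k => Cmul (exp_term u k) (exp_term v (n - k))) n)).
  { cbn [Cpartial]; rewrite Nat.sub_diag, <- Cpartial_mul_l.
    rewrite (Cpartial_ext _ (fun k => Cmul v (Cmul (exp_term u k) (exp_term v (n - k))))).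
    - apply C_ext; simpl; ring.
    - intros k Hk; unfold B; replace (S n - k)%nat with (S (n - k)) by lia.
      transitivity (Cmul (exp_term u k) (Cmul v (exp_term v (n - k)))); [|ring].
      rewrite <- exp_term_S; apply C_ext; simpl; ring. }
  rewrite Hsplit, Hu, Hv, IH, exp_term_S; ring.
Qed.

Definition Ci : C := mkC 0 1.

Lemma Cpow_Ci_even k : Cpow Ci (2 * k) = RtoC ((-1) ^ k).
Proof.
  induction k as [|k IH]; [reflexivity|].
  replace (2 * S k)%nat with (S (S (2 * k))) by lia.
  change (Cpow Ci (S (S (2 * k)))) with (Cmul Ci (Cmul Ci (Cpow Ci (2 * k)))).
  rewrite IH; apply C_ext; simpl; ring.
Qed.

Lemma Cpow_Ci_odd k : Cpow Ci (2 * k + 1) = mkC 0 ((-1) ^ k).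
Proof. rewrite Nat.add_comm, Cpow_add, Cpow_Ci_even; apply C_ext; simpl; ring. Qed.

Lemma is_pseries_cos y : is_pseries (fun n => / INR (fact n) * Re (Cpow Ci n)) y (cos y).
Proof.
  replace (cos y) with (cos y + y * 0) by ring.
  apply is_pseries_odd_even; apply is_pseries_R.
  - apply is_series_Reals.
    unfold cos; destruct (exist_cos (Rsqr y)) as [c Hc]; rewrite Rsqr_pow2 in Hc.
    intros eps Heps; destruct (Hc eps Heps) as [N HN]; exists N; intros n Hn.
    rewrite (sum_eq _ (fun i => cos_n i * (y ^ 2) ^ i)); [apply HN; exact Hn|].
    intros i _; rewrite Cpow_Ci_even; unfold cos_n; simpl Re; field; apply INR_fact_neq_0.
  - eapply is_series_ext; [|exact is_Rseries_0].
    intros n; rewrite Cpow_Ci_odd; simpl Re; rewrite Rmult_0_r, Rmult_0_l; reflexivity.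
Qed.

Lemma is_pseries_sin y : is_pseries (fun n => / INR (fact n) * Im (Cpow Ci n)) y (sin y).
Proof.
  unfold sin; destruct (exist_sin (Rsqr y)) as [s Hs]; rewrite Rsqr_pow2 in Hs.
  replace (y * s) with (0 + y * s) by ring.
  apply is_pseries_odd_even; apply is_pseries_R.
  - eapply is_series_ext; [|exact is_Rseries_0].
    intros n; rewrite Cpow_Ci_even; simpl Im; rewrite Rmult_0_r, Rmult_0_l; reflexivity.
  - apply is_series_Reals.
    intros eps Heps; destruct (Hs eps Heps) as [N HN]; exists N; intros n Hn.
    rewrite (sum_eq _ (fun i => sin_n i * (y ^ 2) ^ i)); [apply HN; exact Hn|].
    intros i _; rewrite Cpow_Ci_odd; unfold sin_n; simpl Im; field; apply INR_fact_neq_0.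
Qed.

Lemma is_Rseries_exp x : is_Rseries (fun n => / INR (fact n) * x ^ n) (exp x).
Proof. exact (proj1 (is_pseries_R _ _ _) (is_exp_Reals x)). Qed.

Lemma ex_Rseries_exp x : ex_Rseries (fun n => / INR (fact n) * x ^ n).
Proof. exists (exp x); apply is_Rseries_exp. Qed.

Lemma Cnorm1_exp_term z n : Cnorm1 (exp_term z n) <= / INR (fact n) * Cnorm1 z ^ n.
Proof.
  assert (0 < / INR (fact n)) by (apply Rinv_0_lt_compat, INR_fact_pos).
  unfold exp_term; rewrite Cnorm1_scale, Rabs_pos_eq by lra.
  apply Rmult_le_compat_l; [lra|apply Cnorm1_pow].
Qed.

Lemma ex_Rseries_Cnorm1_exp_term z : ex_Rseries (fun n => Cnorm1 (exp_term z n)).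
Proof. apply (ex_Rseries_Cnorm1_le _ _ (Cnorm1_exp_term z)), ex_Rseries_exp. Qed.

Lemma is_Cseries_exp z : is_Cseries (exp_term z) (Cexp z).
Proof.
  destruct z as [x y].
  assert (Hx : is_Cseries (exp_term (RtoC x)) (RtoC (exp x))).
  { split; simpl; [eapply is_series_ext; [|apply is_Rseries_exp]
                  |eapply is_series_ext; [|exact is_Rseries_0]];
      intros n; unfold exp_term; rewrite Cpow_RtoC; simpl; ring. }
  assert (Hy : is_Cseries (exp_term (mkC 0 y)) (Cexpi y)).
  { assert (E : forall n, Cpow (mkC 0 y) n = Cscale (y ^ n) (Cpow Ci n)).
    { intros n; rewrite <- Cpow_Cscale; f_equal; apply C_ext; simpl; ring. }
    split; simpl.
    - eapply is_series_ext; [|exact (proj1 (is_pseries_R _ _ _) (is_pseries_cos y))].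
      intros n; unfold exp_term; rewrite E; simpl; ring.
    - eapply is_series_ext; [|exact (proj1 (is_pseries_R _ _ _) (is_pseries_sin y))].
      intros n; unfold exp_term; rewrite E; simpl; ring. }
  (* [e^{x+iy} = e^x e^{iy}] is the Cauchy product, whose terms the binomial formula sums *)
  replace (Cexp (mkC x y)) with (Cmul (RtoC (exp x)) (Cexpi y))
    by (apply C_ext; simpl; ring).
  eapply is_Cseries_ext;
    [|exact (is_Cseries_Cauchy_product _ _ _ _ Hx Hy
               (ex_Rseries_Cnorm1_exp_term _) (ex_Rseries_Cnorm1_exp_term _))].
  intros n; cbv beta; rewrite Cbinomial; f_equal; apply C_ext; simpl; ring.
Qed.

(** * Complex Riemann integrals *)

Notation is_RRInt := (@is_RInt R_NormedModule).

Lemma Rint_unique f a b l : is_RRInt f a b l -> Rint f a b = l.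
Proof.
  intros H; unfold Rint; destruct (excluded_middle_informative _) as [Hi|Hn].
  - rewrite <- (RInt_Reals f a b); apply is_RInt_unique; exact H.
  - exfalso; apply Hn; constructor; apply ex_RInt_Reals_0; exists l; exact H.
Qed.

Lemma is_RRInt_derive F f a b l :
  (forall x, is_derive F x (f x)) -> (forall x, ex_derive f x) -> F b - F a = l ->
  is_RRInt f a b l.
Proof.
  intros HF Hf <-.
  apply (is_RInt_derive (V := R_CompleteNormedModule) F f a b (fun x _ => HF x)).
  intros x _; apply (ex_derive_continuous (K := R_AbsRing) (V := R_NormedModule)), Hf.
Qed.

Lemma is_RRInt_ext (f g : R -> R) a b (l : R) :
  (forall t, f t = g t) -> is_RRInt f a b l -> is_RRInt g a b l.
Proof. intros H; apply is_RInt_ext; intros t _; apply H. Qed.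

Definition is_CInt (f : R -> C) a b v :=
  is_RRInt (fun t => Re (f t)) a b (Re v) /\ is_RRInt (fun t => Im (f t)) a b (Im v).

Lemma Cint_unique f a b v : is_CInt f a b v -> Cint f a b = v.
Proof.
  intros [H1 H2]; unfold Cint; rewrite (Rint_unique _ _ _ _ H1), (Rint_unique _ _ _ _ H2).
  destruct v; reflexivity.
Qed.

Lemma Cint_ext f g a b : (forall t, f t = g t) -> Cint f a b = Cint g a b.
Proof. intros H; f_equal; apply functional_extensionality, H. Qed.

Lemma is_CInt_ext f g a b v : (forall t, f t = g t) -> is_CInt f a b v -> is_CInt g a b v.
Proof.
  intros H [H1 H2]; split; [eapply is_RRInt_ext, H1|eapply is_RRInt_ext, H2];
    intros t; cbv beta; rewrite H; reflexivity.
Qed.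

Lemma is_CInt_plus f g a b v w : is_CInt f a b v -> is_CInt g a b w ->
  is_CInt (fun t => Cadd (f t) (g t)) a b (Cadd v w).
Proof. intros [H1 H2] [H3 H4]; split; apply (is_RInt_plus (V := R_NormedModule)); assumption. Qed.

Lemma is_CInt_mul_l c f a b v : is_CInt f a b v -> is_CInt (fun t => Cmul c (f t)) a b (Cmul c v).
Proof.
  intros [H1 H2]; split; simpl;
    [apply (is_RInt_minus (V := R_NormedModule))|apply (is_RInt_plus (V := R_NormedModule))];
    apply (is_RInt_scal (V := R_NormedModule)); assumption.
Qed.

Lemma is_CInt_Cpartial (f : nat -> R -> C) (I : nat -> C) a b n :
  (forall k, is_CInt (f k) a b (I k)) ->
  is_CInt (fun t => Cpartial (fun k => f k t) n) a b (Cpartial I n).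
Proof. intros H; induction n as [|n IH]; [apply H|apply is_CInt_plus; auto]. Qed.

Lemma is_CInt_real_scale (phi : R -> R) Phi c a b : is_RRInt phi a b Phi ->
  is_CInt (fun t => Cscale (phi t) c) a b (Cscale Phi c).
Proof.
  intros H; split; simpl;
    [replace (Phi * Re c) with (scal (Re c) Phi) by apply Rmult_comm
    |replace (Phi * Im c) with (scal (Im c) Phi) by apply Rmult_comm];
    (eapply is_RRInt_ext; [|exact (is_RInt_scal _ _ _ _ _ H)]);
    intros t; apply Rmult_comm.
Qed.

Lemma is_CInt_Cexpi_period (k : Z) :
  is_CInt (fun t => Cexpi (IZR k * t)) 0 (2 * PI) (if Z.eqb k 0 then RtoC (2 * PI) else C0).
Proof.
  destruct (Z.eqb_spec k 0) as [->|Hk]; [change (IZR 0) with 0|]; split; simpl.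
  - apply (is_RRInt_derive (fun t => t)); [|intros; auto_derive; auto|ring].
    intros x; auto_derive; auto; rewrite Rmult_0_l, cos_0; reflexivity.
  - apply (is_RRInt_derive (fun _ => 0)); [|intros; auto_derive; auto|ring].
    intros x; auto_derive; auto; rewrite Rmult_0_l, sin_0; reflexivity.
  - assert (IZR k <> 0) by (apply not_0_IZR; exact Hk).
    apply (is_RRInt_derive (fun t => sin (IZR k * t) / IZR k)).
    + intros x; auto_derive; auto; field; auto.
    + intros; auto_derive; auto.
    + replace (IZR k * (2 * PI)) with (2 * (IZR k * PI)) by ring.
      rewrite sin_2a, sin_eq_0_1 by (exists k; reflexivity).
      rewrite (Rmult_0_r (IZR k)), sin_0; field; auto.
  - assert (IZR k <> 0) by (apply not_0_IZR; exact Hk).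
    apply (is_RRInt_derive (fun t => - cos (IZR k * t) / IZR k)).
    + intros x; auto_derive; auto; field; auto.
    + intros; auto_derive; auto.
    + replace (IZR k * (2 * PI)) with (2 * (IZR k * PI)) by ring.
      rewrite cos_2a_sin, sin_eq_0_1 by (exists k; reflexivity).
      rewrite (Rmult_0_r (IZR k)), cos_0; field; auto.
Qed.

Lemma is_lim_seq_partial_sums u l : is_Rseries u l -> is_lim_seq (sum_f_R0 u) l.
Proof. intros H; apply is_lim_seq_Reals, is_series_Reals, H. Qed.

Lemma Rseries_remainder_le (u M : nat -> R) s L N :
  (forall n, Rabs (u n) <= M n) -> is_Rseries u s -> is_Rseries M L ->
  Rabs (s - sum_f_R0 u N) <= L - sum_f_R0 M N.
Proof.
  intros HM Hu HL.
  assert (Hd : forall d, Rabs (sum_f_R0 u (d + N) - sum_f_R0 u N)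
                         <= sum_f_R0 M (d + N) - sum_f_R0 M N).
  { induction d as [|d IH]; simpl.
    - unfold Rminus; rewrite Rplus_opp_r, Rplus_opp_r, Rabs_R0; lra.
    - pose proof (HM (S (d + N))).
      pose proof (Rabs_triang (sum_f_R0 u (d + N) - sum_f_R0 u N) (u (S (d + N)))).
      replace (sum_f_R0 u (d + N) + u (S (d + N)) - sum_f_R0 u N)
        with (sum_f_R0 u (d + N) - sum_f_R0 u N + u (S (d + N))) by ring.
      lra. }
  refine (is_lim_seq_le _ _ (Finite _) (Finite _) Hd _ _).
  - apply (is_lim_seq_abs _ (Finite (s - sum_f_R0 u N))), is_lim_seq_minus';
      [apply (is_lim_seq_incr_n (sum_f_R0 u) N), is_lim_seq_partial_sums, Hu
      |apply is_lim_seq_const].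
  - apply is_lim_seq_minus';
      [apply (is_lim_seq_incr_n (sum_f_R0 M) N), is_lim_seq_partial_sums, HL
      |apply is_lim_seq_const].
Qed.

(* The Weierstrass M-test gives uniform convergence of the partial sums, which commutes
   with the Riemann integral. *)
Lemma is_RRInt_series (f : nat -> R -> R) (g : R -> R) (M I : nat -> R) a b L :
  (forall n t, Rabs (f n t) <= M n) -> ex_Rseries M ->
  (forall n, is_RRInt (f n) a b (I n)) ->
  (forall t, is_Rseries (fun n => f n t) (g t)) ->
  is_Rseries I L -> is_RRInt g a b L.
Proof.
  intros HM [LM HLM] HI Hg HL.
  set (S := fun N t => sum_f_R0 (fun n => f n t) N).
  assert (HS : forall N, is_RRInt (S N) a b (sum_f_R0 I N)).
  { induction N as [|N IH]; [apply HI|apply (is_RInt_plus (V := R_NormedModule)); auto]. }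
  assert (Hunif : filterlim S eventually (locally (g : fct_UniformSpace R R_UniformSpace))).
  { apply filterlim_locally; intros eps.
    pose proof (is_lim_seq_partial_sums _ _ HLM) as HM2; apply is_lim_seq_Reals in HM2.
    destruct (HM2 eps (cond_pos eps)) as [N0 HN0]; exists N0; intros n Hn t.
    specialize (HN0 n Hn); unfold Rdist in HN0.
    change (Rabs (S n t - g t) < eps); rewrite Rabs_minus_sym.
    eapply Rle_lt_trans; [apply (Rseries_remainder_le _ M _ LM); auto|].
    rewrite Rabs_minus_sym in HN0; eapply Rle_lt_trans; [apply Rle_abs|exact HN0]. }
  destruct (filterlim_RInt (V := R_CompleteNormedModule) S a b eventually eventually_filter
              g (sum_f_R0 I) HS Hunif) as [Ig [HIg HgI]].
  change (is_lim_seq (sum_f_R0 I) Ig) in HIg.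
  assert (Finite Ig = Finite L) as [= <-]; [|exact HgI].
  rewrite <- (is_lim_seq_unique _ _ HIg).
  exact (is_lim_seq_unique _ _ (is_lim_seq_partial_sums _ _ HL)).
Qed.

Lemma is_CInt_series (f : nat -> R -> C) (g : R -> C) (M : nat -> R) (I : nat -> C) a b L :
  (forall n t, Cnorm1 (f n t) <= M n) -> ex_Rseries M ->
  (forall n, is_CInt (f n) a b (I n)) ->
  (forall t, is_Cseries (fun n => f n t) (g t)) -> is_Cseries I L -> is_CInt g a b L.
Proof.
  intros HM EM HI Hg [HL1 HL2]; split.
  - apply (is_RRInt_series (fun n t => Re (f n t)) _ M (fun n => Re (I n))); auto.
    + intros; eapply Rle_trans; [apply Rabs_Re_le|apply HM].
    + intros n; apply (HI n).
    + intros t; apply (Hg t).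
  - apply (is_RRInt_series (fun n t => Im (f n t)) _ M (fun n => Im (I n))); auto.
    + intros; eapply Rle_trans; [apply Rabs_Im_le|apply HM].
    + intros n; apply (HI n).
    + intros t; apply (Hg t).
Qed.

(** * Circle averages *)

Lemma exp_term_binomial_R A B n :
  sum_f_R0 (fun m => (/ INR (fact m) * A ^ m) * (/ INR (fact (n - m)) * B ^ (n - m))) n =
  / INR (fact n) * (A + B) ^ n.
Proof.
  transitivity (Re (Cpartial (fun m => Cmul (exp_term (RtoC A) m) (exp_term (RtoC B) (n - m))) n)).
  - rewrite Re_Cpartial; apply sum_eq; intros m _.
    unfold exp_term; rewrite !Cpow_RtoC; simpl; ring.
  - rewrite Cbinomial; unfold exp_term.
    replace (Cadd (RtoC A) (RtoC B)) with (RtoC (A + B)) by (apply C_ext; simpl; ring).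
    rewrite Cpow_RtoC; simpl; ring.
Qed.

Lemma Cnorm1_Cauchy_exp_le (a b : nat -> C) A B n :
  (forall m, Cnorm1 (a m) <= / INR (fact m) * A ^ m) ->
  (forall m, Cnorm1 (b m) <= / INR (fact m) * B ^ m) ->
  Cnorm1 (Cpartial (fun m => Cmul (a m) (b (n - m)%nat)) n) <= / INR (fact n) * (A + B) ^ n.
Proof.
  intros Ha Hb; rewrite <- exp_term_binomial_R.
  eapply Rle_trans; [apply Cnorm1_Cpartial|]; apply sum_Rle; intros m _.
  eapply Rle_trans; [apply Cnorm1_mul|].
  apply Rmult_le_compat; auto using Cnorm1_ge_0.
Qed.

Lemma Cnorm1_exp_term_le z A n : Cnorm1 z <= A -> Cnorm1 (exp_term z n) <= / INR (fact n) * A ^ n.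
Proof.
  intros Hz; eapply Rle_trans; [apply Cnorm1_exp_term|].
  apply Rmult_le_compat_l; [left; apply Rinv_0_lt_compat, INR_fact_pos|].
  apply pow_incr; split; [apply Cnorm1_ge_0|exact Hz].
Qed.

(* [bessel0 w] is the entire function [sum_k w^k / (k!)^2 = I_0 (2 sqrt w)]. *)
Definition bessel0_term (w : C) (k : nat) : C := Cscale (/ INR (fact k) ^ 2) (Cpow w k).

Definition bessel0 (w : C) : C :=
  mkC (Series (fun k => Re (bessel0_term w k))) (Series (fun k => Im (bessel0_term w k))).

Lemma Cnorm1_bessel0_term_le w A k :
  Cnorm1 w <= A -> Cnorm1 (bessel0_term w k) <= / INR (fact k) * A ^ k.
Proof.
  intros Hw; eapply Rle_trans; [|apply (Cnorm1_exp_term_le w A k Hw)].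
  assert (1 <= INR (fact k)) by (apply (le_INR 1), lt_O_fact).
  unfold bessel0_term, exp_term; rewrite !Cnorm1_scale.
  apply Rmult_le_compat_r; [apply Cnorm1_ge_0|].
  rewrite !Rabs_pos_eq by (left; apply Rinv_0_lt_compat; try apply pow_lt; lra).
  apply Rinv_le_contravar; [lra|simpl; nra].
Qed.

Lemma ex_Rseries_Cnorm1_bessel0_term w : ex_Rseries (fun k => Cnorm1 (bessel0_term w k)).
Proof.
  apply (ex_Rseries_Cnorm1_le _ _ (fun k => Cnorm1_bessel0_term_le w _ k (Rle_refl _))).
  apply ex_Rseries_exp.
Qed.

Lemma is_Cseries_bessel0 w : is_Cseries (bessel0_term w) (bessel0 w).
Proof.
  destruct (ex_Cseries_le (bessel0_term w) _ (fun k => Cnorm1_bessel0_term_le w _ k (Rle_refl _))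
              (ex_Rseries_exp _)) as [l [H1 H2]].
  split; apply Series_correct; eexists; eassumption.
Qed.

Lemma exp_term_rotation_product a b t n m : (m <= n)%nat ->
  Cmul (exp_term (Cmul a (Cexpi t)) m) (exp_term (Cmul b (Cexpi (- t))) (n - m)) =
  Cmul (Cmul (exp_term a m) (exp_term b (n - m)))
       (Cexpi (IZR (Z.of_nat m - Z.of_nat (n - m)) * t)).
Proof.
  intros Hm; unfold exp_term; rewrite !Cpow_Cmul, !Cpow_Cexpi.
  replace (IZR (Z.of_nat m - Z.of_nat (n - m)) * t) with (INR m * t + INR (n - m) * - t)
    by (rewrite minus_IZR, <- !INR_IZR_INZ; ring).
  rewrite Cexpi_add; apply C_ext; simpl; ring.
Qed.

Definition circle_term (a b : C) (n : nat) (t : R) : C :=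
  Cpartial (fun m => Cmul (exp_term (Cmul a (Cexpi t)) m)
                          (exp_term (Cmul b (Cexpi (- t))) (n - m))) n.

Definition circle_term_integral (a b : C) (n : nat) : C :=
  Cpartial (fun m => Cmul (Cmul (exp_term a m) (exp_term b (n - m)))
    (if Z.eqb (Z.of_nat m - Z.of_nat (n - m)) 0 then RtoC (2 * PI) else C0)) n.

Lemma is_CInt_circle_term a b n :
  is_CInt (circle_term a b n) 0 (2 * PI) (circle_term_integral a b n).
Proof.
  eapply is_CInt_ext;
    [|apply is_CInt_Cpartial; intros m; apply is_CInt_mul_l, is_CInt_Cexpi_period].
  intros t; apply Cpartial_ext; intros m Hm; symmetry; apply exp_term_rotation_product, Hm.
Qed.

Lemma circle_term_integral_odd a b k : circle_term_integral a b (2 * k + 1) = C0.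
Proof.
  apply Cpartial_zero; intros m Hm.
  destruct (Z.eqb_spec (Z.of_nat m - Z.of_nat (2 * k + 1 - m)) 0); [lia|ring].
Qed.

Lemma circle_term_integral_even a b k :
  circle_term_integral a b (2 * k) = Cscale (2 * PI) (bessel0_term (Cmul a b) k).
Proof.
  unfold circle_term_integral; rewrite (Cpartial_single _ _ k); [|lia|].
  - replace (2 * k - k)%nat with k by lia; rewrite Z.sub_diag, Z.eqb_refl.
    unfold exp_term, bessel0_term; rewrite Cpow_Cmul.
    pose proof (INR_fact_pos k); apply C_ext; simpl; field; lra.
  - intros m Hm Hne; destruct (Z.eqb_spec (Z.of_nat m - Z.of_nat (2 * k - m)) 0); [lia|ring].
Qed.

Lemma is_CInt_exp_circle a b :
  is_CInt (fun t => Cexp (Cadd (Cmul a (Cexpi t)) (Cmul b (Cexpi (- t))))) 0 (2 * PI)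
    (Cscale (2 * PI) (bessel0 (Cmul a b))).
Proof.
  apply (is_CInt_series (circle_term a b) _
           (fun n => / INR (fact n) * (2 * Cnorm1 a + 2 * Cnorm1 b) ^ n)
           (circle_term_integral a b)).
  - intros n t; apply Cnorm1_Cauchy_exp_le; intros m; apply Cnorm1_exp_term_le, Cnorm1_mul_Cexpi.
  - apply ex_Rseries_exp.
  - apply is_CInt_circle_term.
  - intros t; rewrite Cexp_add.
    apply is_Cseries_Cauchy_product; auto using is_Cseries_exp, ex_Rseries_Cnorm1_exp_term.
  - apply is_Cseries_even; [|apply circle_term_integral_odd].
    eapply is_Cseries_ext; [intros k; symmetry; apply circle_term_integral_even|].
    apply is_Cseries_scale, is_Cseries_bessel0.
Qed.

(** * Beta integrals *)

Lemma is_RRInt_lin_comb f g a b lf lg c d l :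
  is_RRInt f a b lf -> is_RRInt g a b lg -> c * lf + d * lg = l ->
  is_RRInt (fun t => c * f t + d * g t) a b l.
Proof.
  intros Hf Hg <-.
  apply (is_RInt_plus (V := R_NormedModule));
    apply (is_RInt_scal (V := R_NormedModule)); assumption.
Qed.

Lemma is_RRInt_cos_odd_sin j :
  is_RRInt (fun t => cos t ^ (2 * j + 1) * sin t) 0 (PI / 2) (/ (2 * INR j + 2)).
Proof.
  pose proof (pos_INR j).
  apply (is_RRInt_derive (fun t => - cos t ^ (2 * j + 2) / (2 * INR j + 2))).
  - intros x; auto_derive; auto.
    replace (Init.Nat.pred (j + (j + 0) + 2)) with (2 * j + 1)%nat by lia.
    replace (INR (j + (j + 0) + 2)) with (2 * INR j + 2) by (rewrite !plus_INR; simpl; ring).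
    field; lra.
  - intros x; auto_derive; auto.
  - rewrite cos_PI2, cos_0, pow1, pow_i by lia; field; lra.
Qed.

(* The integrand is the derivative of [cos^(2j+2) sin^(2l+2)], which vanishes at [0] and [PI/2]. *)
Lemma is_RRInt_cos_sin_recursion j l :
  is_RRInt (fun t => (2 * INR l + 2) * (cos t ^ (2 * S j + 1) * sin t ^ (2 * l + 1))
                     - (2 * INR j + 2) * (cos t ^ (2 * j + 1) * sin t ^ (2 * S l + 1)))
    0 (PI / 2) 0.
Proof.
  apply (is_RRInt_derive (fun t => cos t ^ (2 * j + 2) * sin t ^ (2 * l + 2))).
  - intros x; auto_derive; auto.
    replace (Init.Nat.pred (j + (j + 0) + 2)) with (2 * j + 1)%nat by lia.
    replace (Init.Nat.pred (l + (l + 0) + 2)) with (2 * l + 1)%nat by lia.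
    replace (j + (j + 0) + 2)%nat with (2 * j + 2)%nat by lia.
    replace (l + (l + 0) + 2)%nat with (2 * l + 2)%nat by lia.
    replace (2 * S j + 1)%nat with (2 * j + 3)%nat by lia.
    replace (2 * S l + 1)%nat with (2 * l + 3)%nat by lia.
    rewrite !plus_INR, !mult_INR, !pow_add; simpl; ring.
  - intros x; auto_derive; auto.
  - rewrite cos_PI2, sin_0, !pow_i by lia; ring.
Qed.

Lemma is_RRInt_cos_sin_beta j l :
  is_RRInt (fun t => cos t ^ (2 * j + 1) * sin t ^ (2 * l + 1)) 0 (PI / 2)
    (INR (fact j) * INR (fact l) / (2 * INR (fact (j + l + 1)))).
Proof.
  revert j; induction l as [|l IH]; intros j;
    pose proof (INR_fact_pos j); pose proof (pos_INR j).
  - replace (INR (fact j) * INR (fact 0) / (2 * INR (fact (j + 0 + 1)))) with (/ (2 * INR j + 2))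
      by (replace (j + 0 + 1)%nat with (S j) by lia; rewrite fact_simpl, mult_INR, S_INR;
          simpl; field; lra).
    eapply is_RRInt_ext; [|apply is_RRInt_cos_odd_sin]; intros t; simpl; ring.
  - pose proof (INR_fact_pos l); pose proof (INR_fact_pos (j + S l)); pose proof (pos_INR l).
    eapply is_RRInt_ext;
      [|apply (is_RRInt_lin_comb _ _ _ _ _ _
                 ((2 * INR l + 2) / (2 * INR j + 2)) (- / (2 * INR j + 2))
                 _ (IH (S j)) (is_RRInt_cos_sin_recursion j l))].
    + intros t; cbv beta; field; lra.
    + replace (S j + l + 1)%nat with (S (j + S l)) by lia.
      replace (j + S l + 1)%nat with (S (j + S l)) by lia.
      pose proof (pos_INR (j + S l)).
      rewrite !fact_simpl, !mult_INR, !S_INR; field; repeat split; lra.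
Qed.

Lemma Cnorm1_scale_le r w : Rabs r <= 1 -> Cnorm1 (Cscale r w) <= Cnorm1 w.
Proof. intros H; rewrite Cnorm1_scale; pose proof (Cnorm1_ge_0 w); nra. Qed.

Lemma Rabs_sqr_le_1 r : -1 <= r <= 1 -> Rabs (r ^ 2) <= 1.
Proof. intros H; rewrite Rabs_pos_eq by (apply pow2_ge_0); simpl; nra. Qed.

Lemma bessel0_term_scale r w k : bessel0_term (Cscale r w) k = Cscale (r ^ k) (bessel0_term w k).
Proof. unfold bessel0_term; rewrite Cpow_Cscale; apply C_ext; simpl; ring. Qed.

Definition theta_term (x y : C) (n : nat) (t : R) : C :=
  Cscale (2 * sin t * cos t)
    (Cpartial (fun k => Cmul (bessel0_term (Cscale (cos t ^ 2) x) k)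
                             (bessel0_term (Cscale (sin t ^ 2) y) (n - k))) n).

Lemma Cnorm1_theta_term_le x y n t :
  Cnorm1 (theta_term x y n t) <= / INR (fact n) * (Cnorm1 x + Cnorm1 y) ^ n.
Proof.
  unfold theta_term; eapply Rle_trans; [apply Cnorm1_scale_le|].
  - rewrite <- sin_2a; apply Rabs_le, SIN_bound.
  - apply Cnorm1_Cauchy_exp_le; intros m; apply Cnorm1_bessel0_term_le, Cnorm1_scale_le,
      Rabs_sqr_le_1; [apply COS_bound|apply SIN_bound].
Qed.

Lemma is_CInt_theta_term x y n :
  is_CInt (theta_term x y n) 0 (PI / 2) (Cscale (/ INR (fact (S n))) (exp_term (Cadd x y) n)).
Proof.
  set (c k := Cscale 2 (Cmul (bessel0_term x k) (bessel0_term y (n - k)))).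
  set (beta k := INR (fact k) * INR (fact (n - k)) / (2 * INR (fact (k + (n - k) + 1)))).
  assert (Hint : is_CInt
    (fun t => Cpartial (fun k => Cscale (cos t ^ (2 * k + 1) * sin t ^ (2 * (n - k) + 1)) (c k)) n)
    0 (PI / 2) (Cpartial (fun k => Cscale (beta k) (c k)) n)).
  { apply is_CInt_Cpartial; intros k; apply is_CInt_real_scale, is_RRInt_cos_sin_beta. }
  replace (Cscale (/ INR (fact (S n))) (exp_term (Cadd x y) n))
    with (Cpartial (fun k => Cscale (beta k) (c k)) n).
  - eapply is_CInt_ext; [|exact Hint]; intros t; unfold theta_term.
    rewrite <- Cpartial_scale; apply Cpartial_ext; intros k _; unfold c.
    rewrite !bessel0_term_scale, <- !pow_mult, !pow_add; apply C_ext; simpl; ring.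
  - rewrite <- Cbinomial, <- Cpartial_scale; apply Cpartial_ext; intros k Hk; unfold c, beta.
    replace (k + (n - k) + 1)%nat with (S n) by lia.
    pose proof (INR_fact_pos k); pose proof (INR_fact_pos (n - k)); pose proof (INR_fact_pos (S n)).
    unfold bessel0_term, exp_term; apply C_ext; cbn [Re Im Cscale Cmul]; field; repeat split; lra.
Qed.

Lemma is_CInt_theta_bessel0 x y L :
  is_Cseries (fun n => Cscale (/ INR (fact (S n))) (exp_term (Cadd x y) n)) L ->
  is_CInt (fun t => Cscale (2 * sin t * cos t)
                      (Cmul (bessel0 (Cscale (cos t ^ 2) x)) (bessel0 (Cscale (sin t ^ 2) y))))
    0 (PI / 2) L.
Proof.
  intros HL.
  apply (is_CInt_series (theta_term x y) _ (fun n => / INR (fact n) * (Cnorm1 x + Cnorm1 y) ^ n)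
           (fun n => Cscale (/ INR (fact (S n))) (exp_term (Cadd x y) n))); auto.
  - apply Cnorm1_theta_term_le.
  - apply ex_Rseries_exp.
  - apply is_CInt_theta_term.
  - intros t; apply is_Cseries_scale, is_Cseries_Cauchy_product;
      auto using is_Cseries_bessel0, ex_Rseries_Cnorm1_bessel0_term.
Qed.

(** * The group actions *)

Definition Lcol (i : nat) : nat := fst (Lrow i).
Definition Lsign (i : nat) : R := snd (Lrow i).

Ltac destruct_index i :=
  let H := fresh in
  assert (H : (i = 1 \/ i = 2 \/ i = 3 \/ i = 4 \/ i = 5 \/ i = 6 \/ i = 7 \/ i = 8)%nat) by lia;
  destruct H as [->|[->|[->|[->|[->|[->|[->| ->]]]]]]].

(* [Lcol] is an involution, so the column [j] of [L8] has its entry in row [Lcol j]. *)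
Lemma mat_mul_L8_r (M : Cmat) i j : (1 <= j <= 8)%nat ->
  mat_mul 8 M L8 i j = Cscale (Lsign (Lcol j)) (M i (Lcol j)).
Proof.
  intros Hj; unfold mat_mul, L8; destruct_index j; cbn -[Rmult Rplus Rminus Ropp];
    apply C_ext; cbn -[Rmult Rplus Rminus Ropp]; ring.
Qed.

Lemma mat_mul_adj_L8_l (M : Cmat) i j : (1 <= i <= 8)%nat ->
  mat_mul 8 (mat_adj L8) M i j = Cscale (Lsign (Lcol i)) (M (Lcol i) j).
Proof.
  intros Hi; unfold mat_mul, mat_adj, L8; destruct_index i; cbn -[Rmult Rplus Rminus Ropp];
    apply C_ext; cbn -[Rmult Rplus Rminus Ropp]; ring.
Qed.

Lemma T_SU2_entry g i j : (1 <= i <= 8)%nat -> (1 <= j <= 8)%nat ->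
  T_SU2 g i j = Cscale (Lsign (Lcol i) * Lsign (Lcol j)) (V8 g (Lcol i) (Lcol j)).
Proof.
  intros Hi Hj; unfold T_SU2; rewrite mat_mul_adj_L8_l, mat_mul_L8_r by exact Hj || exact Hi.
  apply C_ext; simpl; ring.
Qed.

Lemma Csum_ext k f g : (forall s, (1 <= s <= k)%nat -> f s = g s) -> Csum k f = Csum k g.
Proof.
  induction k as [|k IH]; intros H; simpl; [reflexivity|].
  rewrite IH, H; [reflexivity|lia|intros; apply H; lia].
Qed.

Definition form_A (z w : Cvec) : C :=
  Cadd (Cadd (pair_ z w 1 1) (pair_ z w 2 2)) (Cadd (pair_ z w 3 3) (pair_ z w 4 4)).
Definition form_B (z w : Cvec) : C :=
  Cadd (Cadd (pair_ z w 5 5) (pair_ z w 6 6)) (Cadd (pair_ z w 7 7) (pair_ z w 8 8)).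
Definition form_C (z w : Cvec) : C :=
  Csub (Cadd (pair_ z w 1 7) (pair_ z w 3 5)) (Cadd (pair_ z w 4 6) (pair_ z w 2 8)).
Definition form_D (z w : Cvec) : C :=
  Csub (Cadd (pair_ z w 7 1) (pair_ z w 5 3)) (Cadd (pair_ z w 6 4) (pair_ z w 8 2)).

Ltac destruct_vectors z w :=
  repeat match goal with |- context [z ?a] => destruct (z a) end;
  repeat match goal with |- context [w ?a] => destruct (w a) end.

Lemma varrho_forms z w :
  varrho z w = Csub (Cmul (form_A z w) (form_B z w)) (Cmul (form_C z w) (form_D z w)).
Proof.
  unfold varrho, form_A, form_B, form_C, form_D, pair_; cbn -[Rmult Rplus Rminus Ropp].
  destruct_vectors z w; apply C_ext; cbn -[Rmult Rplus Rminus Ropp]; ring.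
Qed.

Lemma Cdot_T_SU2 theta alpha gamma z w :
  Cdot 8 z (mat_vec 8 (T_SU2 (g_SU2 theta alpha gamma)) w) =
  Cadd (Cscale (cos theta)
          (Cadd (Cmul (Cexpi (- alpha)) (form_A z w)) (Cmul (Cexpi alpha) (form_B z w))))
       (Cscale (sin theta)
          (Csub (Cmul (Cexpi (- gamma)) (form_C z w)) (Cmul (Cexpi gamma) (form_D z w)))).
Proof.
  set (g := g_SU2 theta alpha gamma).
  unfold Cdot, mat_vec; rewrite (Csum_ext 8 _ (fun s => Cmul (z s) (Cconj (Csum 8 (fun j =>
    Cmul (Cscale (Lsign (Lcol s) * Lsign (Lcol j)) (V8 g (Lcol s) (Lcol j))) (w j)))))).
  2: { intros s Hs; do 2 f_equal; apply Csum_ext; intros j Hj; rewrite T_SU2_entry; auto. }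
  unfold g.
  unfold V8, g_SU2, Lcol, Lsign, form_A, form_B, form_C, form_D, pair_;
    cbn -[cos sin Rmult Rplus Rminus Ropp].
  destruct_vectors z w; apply C_ext; cbn -[cos sin Rmult Rplus Rminus Ropp];
    rewrite ?cos_neg, ?sin_neg; ring.
Qed.

Lemma Cdot_T_S1 psi z w :
  Cdot 4 z (mat_vec 4 (T_S1 psi) w) =
  Cadd (Cmul (u12 z w) (Cexpi psi)) (Cmul (u34 z w) (Cexpi (- psi))).
Proof.
  unfold Cdot, mat_vec, T_S1, u12, u34; cbn -[cos sin Rmult Rplus Rminus Ropp].
  destruct_vectors z w; apply C_ext; cbn -[cos sin Rmult Rplus Rminus Ropp];
    rewrite ?cos_neg, ?sin_neg; ring.
Qed.

(** * The three kernels *)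

Lemma Cint_exp_circle c a b :
  Cint (fun t => Cmul c (Cexp (Cadd (Cmul a (Cexpi t)) (Cmul b (Cexpi (- t)))))) 0 (2 * PI) =
  Cmul c (Cscale (2 * PI) (bessel0 (Cmul a b))).
Proof. apply Cint_unique, is_CInt_mul_l, is_CInt_exp_circle. Qed.

Lemma pow_inv_sqr h k : h <> 0 -> (/ h ^ 2) ^ k = / h ^ (2 * k).
Proof. intros H; rewrite pow_mult, pow_inv; reflexivity. Qed.

Lemma Q2_series hbar z w : 0 < hbar ->
  Cseries_sum (Q2_term hbar z w)
    (Cscale (/ 2) (Cadd (Cexp (Cscale (/ hbar) (u12 z w))) (Cexp (Cscale (- / hbar) (u12 z w))))).
Proof.
  intros Hh; set (v := Cscale (/ hbar) (u12 z w)).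
  replace (Cscale (- / hbar) (u12 z w)) with (Cscale (-1) v) by (apply C_ext; simpl; ring).
  set (T n := Cscale (/ 2) (Cadd (exp_term v n) (exp_term (Cscale (-1) v) n))).
  assert (HT : is_Cseries T (Cscale (/ 2) (Cadd (Cexp v) (Cexp (Cscale (-1) v)))))
    by (apply is_Cseries_scale, is_Cseries_plus; apply is_Cseries_exp).
  assert (Hodd : forall k, T (2 * k + 1)%nat = C0).
  { intros k; unfold T, exp_term; rewrite Cpow_Cscale, Nat.add_1_r, pow_1_odd.
    apply C_ext; simpl; ring. }
  assert (Hev : forall k, T (2 * k)%nat = exp_term v (2 * k)).
  { intros k; unfold T, exp_term; rewrite Cpow_Cscale, pow_1_even.
    apply C_ext; cbn [Re Im Cscale Cadd]; field; apply INR_fact_neq_0. }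
  (* the even subseries converges, and since the odd terms vanish its sum is that of [T] *)
  destruct (ex_Cseries_le (fun k => T (2 * k)%nat) (fun k => / INR (fact k) * (Cnorm1 v ^ 2) ^ k))
    as [L HL].
  { intros k; rewrite Hev; eapply Rle_trans; [apply Cnorm1_exp_term|].
    rewrite <- pow_mult; apply Rmult_le_compat_r; [apply pow_le, Cnorm1_ge_0|].
    apply Rinv_le_contravar; [apply INR_fact_pos|apply le_INR, fact_le; lia]. }
  { apply ex_Rseries_exp. }
  rewrite <- (is_Cseries_unique _ _ _ (is_Cseries_even _ _ HL Hodd) HT).
  apply is_Cseries_Cseries_sum; eapply is_Cseries_ext; [|exact HL].
  intros k; cbv beta; rewrite Hev; unfold exp_term, Q2_term, v; rewrite Cpow_Cscale, pow_inv.
  pose proof (INR_fact_pos (2 * k)); pose proof (pow_lt _ (2 * k) Hh).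
  apply C_ext; cbn [Re Im Cscale]; field; lra.
Qed.

Lemma Q4_series hbar z w : 0 < hbar ->
  Cseries_sum (Q4_term hbar z w)
    (Cscale (/ (2 * PI))
       (Cint (fun psi => Cexp (Cscale (/ hbar) (Cdot 4 z (mat_vec 4 (T_S1 psi) w)))) 0 (2 * PI))).
Proof.
  intros Hh; set (a := Cscale (/ hbar) (u12 z w)); set (b := Cscale (/ hbar) (u34 z w)).
  rewrite (Cint_ext _ (fun t => Cmul C1 (Cexp (Cadd (Cmul a (Cexpi t)) (Cmul b (Cexpi (- t))))))).
  2: { intros t; rewrite Cdot_T_S1; unfold a, b; rewrite !Cscale_RtoC.
       match goal with |- _ = Cmul _ (Cexp ?e) => transitivity (Cexp e); [f_equal|]; ring end. }
  rewrite Cint_exp_circle.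
  replace (Cscale (/ (2 * PI)) (Cmul C1 (Cscale (2 * PI) (bessel0 (Cmul a b)))))
    with (bessel0 (Cmul a b))
    by (pose proof PI_RGT_0; apply C_ext; simpl; field; lra).
  apply is_Cseries_Cseries_sum; eapply is_Cseries_ext; [|apply is_Cseries_bessel0].
  intros k; unfold bessel0_term, Q4_term, a, b.
  replace (Cmul (Cscale (/ hbar) (u12 z w)) (Cscale (/ hbar) (u34 z w)))
    with (Cscale (/ hbar ^ 2) (Cmul (u12 z w) (u34 z w))) by (apply C_ext; simpl; field; lra).
  rewrite Cpow_Cscale, pow_inv_sqr, Cpow_Cmul by lra.
  pose proof (INR_fact_pos k); pose proof (pow_lt _ (2 * k) Hh).
  apply C_ext; cbn [Re Im Cscale]; field; lra.
Qed.

Lemma Cscale_Cexp_split k E P Q : E = Cadd P Q ->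
  Cscale k (Cexp E) = Cmul (Cscale k (Cexp P)) (Cexp Q).
Proof. intros ->; rewrite Cexp_add, !Cscale_RtoC; ring. Qed.

Section Q8_integral.

Variables (hbar : R) (z w : Cvec).
Hypothesis Hhbar : hbar <> 0.

Let fA := form_A z w.
Let fB := form_B z w.
Let fC := form_C z w.
Let fD := form_D z w.
Let x := Cscale (/ hbar ^ 2) (Cmul fA fB).
Let y := Cscale (/ hbar ^ 2) (Copp (Cmul fC fD)).
Let density (theta : R) := / (2 * PI ^ 2) * sin theta * cos theta.

Lemma Q8_gamma_integral theta alpha :
  Cint (fun gamma => Cscale (density theta)
          (Cexp (Cscale (/ hbar) (Cdot 8 z (mat_vec 8 (T_SU2 (g_SU2 theta alpha gamma)) w)))))
    0 (2 * PI) =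
  Cmul (Cscale (density theta)
          (Cexp (Cadd (Cmul (Cscale (/ hbar) (Cscale (cos theta) fB)) (Cexpi alpha))
                      (Cmul (Cscale (/ hbar) (Cscale (cos theta) fA)) (Cexpi (- alpha))))))
       (Cscale (2 * PI) (bessel0 (Cscale (sin theta ^ 2) y))).
Proof.
  set (a := Cscale (/ hbar) (Cscale (sin theta) (Copp fD))).
  set (b := Cscale (/ hbar) (Cscale (sin theta) fC)).
  set (K := Cscale (density theta)
          (Cexp (Cadd (Cmul (Cscale (/ hbar) (Cscale (cos theta) fB)) (Cexpi alpha))
                      (Cmul (Cscale (/ hbar) (Cscale (cos theta) fA)) (Cexpi (- alpha)))))).
  rewrite (Cint_ext _ (fun gamma =>
    Cmul K (Cexp (Cadd (Cmul a (Cexpi gamma)) (Cmul b (Cexpi (- gamma))))))).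
  - rewrite Cint_exp_circle; do 3 f_equal.
    unfold a, b, y; apply C_ext; simpl; field; auto.
  - intros gamma; apply Cscale_Cexp_split.
    rewrite Cdot_T_SU2; fold fA fB fC fD; unfold a, b; rewrite !Cscale_RtoC; ring.
Qed.

Lemma Q8_alpha_integral theta :
  Cint (fun alpha =>
          Cmul (Cscale (density theta)
                  (Cexp (Cadd (Cmul (Cscale (/ hbar) (Cscale (cos theta) fB)) (Cexpi alpha))
                              (Cmul (Cscale (/ hbar) (Cscale (cos theta) fA)) (Cexpi (- alpha))))))
               (Cscale (2 * PI) (bessel0 (Cscale (sin theta ^ 2) y))))
    0 (2 * PI) =
  Cscale (2 * sin theta * cos theta)
    (Cmul (bessel0 (Cscale (cos theta ^ 2) x)) (bessel0 (Cscale (sin theta ^ 2) y))).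
Proof.
  set (a := Cscale (/ hbar) (Cscale (cos theta) fB)).
  set (b := Cscale (/ hbar) (Cscale (cos theta) fA)).
  set (K := Cmul (RtoC (density theta)) (Cscale (2 * PI) (bessel0 (Cscale (sin theta ^ 2) y)))).
  rewrite (Cint_ext _ (fun alpha =>
    Cmul K (Cexp (Cadd (Cmul a (Cexpi alpha)) (Cmul b (Cexpi (- alpha))))))).
  - rewrite Cint_exp_circle.
    replace (Cmul a b) with (Cscale (cos theta ^ 2) x)
      by (unfold a, b, x; apply C_ext; simpl; field; auto).
    unfold K, density; pose proof PI_RGT_0; apply C_ext; simpl; field; lra.
  - intros alpha; unfold K; rewrite !Cscale_RtoC; ring.
Qed.

Lemma Q8_series :
  Cseries_sum (Q8_term hbar z w)
    (Cint (fun theta =>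
       Cint (fun alpha =>
         Cint (fun gamma =>
           Cscale (/ (2 * PI ^ 2) * sin theta * cos theta)
             (Cexp (Cscale (/ hbar) (Cdot 8 z (mat_vec 8 (T_SU2 (g_SU2 theta alpha gamma)) w)))))
           0 (2 * PI))
         0 (2 * PI))
       0 (PI / 2)).
Proof.
  rewrite (Cint_ext _ (fun theta => Cscale (2 * sin theta * cos theta)
              (Cmul (bessel0 (Cscale (cos theta ^ 2) x)) (bessel0 (Cscale (sin theta ^ 2) y))))).
  2: { intros theta; rewrite <- Q8_alpha_integral; apply Cint_ext; intros alpha.
       apply Q8_gamma_integral. }
  destruct (ex_Cseries_le (fun n => Cscale (/ INR (fact (S n))) (exp_term (Cadd x y) n))
              (fun n => / INR (fact n) * Cnorm1 (Cadd x y) ^ n)) as [L HL].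
  { intros n; eapply Rle_trans; [apply Cnorm1_scale_le|apply Cnorm1_exp_term].
    assert (1 <= INR (fact (S n))) by (apply (le_INR 1), lt_O_fact).
    rewrite Rabs_pos_eq by (left; apply Rinv_0_lt_compat; lra).
    rewrite <- Rinv_1; apply Rinv_le_contravar; lra. }
  { apply ex_Rseries_exp. }
  rewrite (Cint_unique _ _ _ _ (is_CInt_theta_bessel0 x y L HL)).
  apply is_Cseries_Cseries_sum; eapply is_Cseries_ext; [|exact HL].
  intros n; unfold exp_term, Q8_term; rewrite varrho_forms; fold fA fB fC fD.
  replace (Cadd x y) with (Cscale (/ hbar ^ 2) (Csub (Cmul fA fB) (Cmul fC fD)))
    by (unfold x, y; apply C_ext; simpl; ring).
  rewrite Cpow_Cscale, pow_inv_sqr by exact Hhbar.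
  pose proof (INR_fact_pos n); pose proof (INR_fact_pos (S n)).
  pose proof (pow_nonzero hbar (2 * n) Hhbar).
  apply C_ext; cbn [Re Im Cscale]; field; repeat split; lra.
Qed.

End Q8_integral.

Theorem proposition2p3 (hbar : R) (Hhbar : 0 < hbar) :
  (forall z w : Cvec, vec_nonzero 2 z -> vec_nonzero 2 w ->
     Cseries_sum (Q2_term hbar z w)
       (Cscale (/ 2) (Cadd (Cexp (Cscale (/ hbar) (u12 z w)))
                           (Cexp (Cscale (- / hbar) (u12 z w)))))) /\
  (forall z w : Cvec, vec_nonzero 4 z -> vec_nonzero 4 w ->
     Cseries_sum (Q4_term hbar z w)
       (Cscale (/ (2 * PI))
          (Cint (fun psi => Cexp (Cscale (/ hbar) (Cdot 4 z (mat_vec 4 (T_S1 psi) w))))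
                0 (2 * PI)))) /\
  (forall z w : Cvec, vec_nonzero 8 z -> vec_nonzero 8 w ->
     Cseries_sum (Q8_term hbar z w)
       (Cint (fun theta =>
          Cint (fun alpha =>
            Cint (fun gamma =>
              Cscale (/ (2 * PI ^ 2) * sin theta * cos theta)
                (Cexp (Cscale (/ hbar)
                   (Cdot 8 z (mat_vec 8 (T_SU2 (g_SU2 theta alpha gamma)) w)))))
              0 (2 * PI))
            0 (2 * PI))
          0 (PI / 2))).
Proof.
  split; [|split]; intros z w _ _.
  - exact (Q2_series hbar z w Hhbar).
  - exact (Q4_series hbar z w Hhbar).
  - apply Q8_series; lra.
Qed.
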